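(* Assume $\mathcal G$ is connected. A vector $\mathrm y=(\mathrm y_1,\dots,\mathrm y_{|\mathbb V|})\in(\mathbb R^d)^{|\mathbb V|}$ is forcible as a steady state, i.e. there exist output-strictly MEICMP controllers $\{\Pi_e\}_{e\in\mathbb E}$ such that the closed loop $(\Sigma,\Pi,\mathcal G)$ has a steady state with output $\mathrm y$, if and only if $\mathbf 0\in\sum_{i=1}^{|\mathbb V|}k_i^{-1}(\mathrm y_i)$ (Minkowski sum of subsets of $\mathbb R^d$).
   Context: Graph and network: $\mathcal G=(\mathbb V,\mathbb E)$ finite graph with arbitrarily oriented edges, incidence matrix $E$ ($E_{ik}=-1$, $E_{jk}=1$ for edge $k=(i,j)$, other entries of column $k$ zero), $d\ge1$, $\mathcal E=E\otimes I_d$. Agents $\Sigma_i$: $\dot x_i=f_i(x_i,u_i,\mathrm w_i)$, $y_i=h_i(x_i,u_i,\mathrm w_i)$, $u_i,y_i\in\mathbb R^d$, $\mathrm w_i$ fixed constants, assumed MEICMP; controllers $\Pi_e$: $\dot\eta_e=\phi_e(\eta_e,\zeta_e)$, $\mu_e=\psi_e(\eta_e,\zeta_e)$; closed loop: $\zeta=\mathcal E^Ty$, $u=-\mathcal E\mu$. Steady-state relation of agent $i$: $k_i=\{(\mathrm u_i,\mathrm y_i):\exists\mathrm x_i,\ f_i(\mathrm x_i,\mathrm u_i,\mathrm w_i)=0,\ \mathrm y_i=h_i(\mathrm x_i,\mathrm u_i,\mathrm w_i)\}$, $k_i^{-1}(\mathrm y_i)=\{\mathrm u_i:(\mathrm u_i,\mathrm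 y_i)\in k_i\}$. A 4-tuple of constants $(\mathrm u,\mathrm y,\zeta,\mu)$ is a steady state of the closed loop if there are constant $\mathrm x_i,\eta_e$ with $f_i(\mathrm x_i,\mathrm u_i,\mathrm w_i)=0$, $\mathrm y_i=h_i(\mathrm x_i,\mathrm u_i,\mathrm w_i)$, $\phi_e(\eta_e,\zeta_e)=0$, $\mu_e=\psi_e(\eta_e,\zeta_e)$, $\zeta=\mathcal E^T\mathrm y$, $\mathrm u=-\mathcal E\mu$. A relation $R\subseteq\mathbb R^d\times\mathbb R^d$ is cyclically monotone (CM) if $\sum_{i=1}^N y_i^T(u_i-u_{i-1})\ge0$ for all $N\ge1$, $(u_1,y_1),\dots,(u_N,y_N)\in R$, $u_0=u_N$; maximal CM if not strictly contained in a larger CM relation. A system with input $u$, output $y$, state $x$ is (output-strictly) passive w.r.t. a steady-state pair $(\mathrm u,\mathrm y)$ if there is a storage $S(x)\ge0$ and $\rho\ge0$ ($\rho>0$ for output-strict) with $S(x(t_1))-S(x(t_0))\le\int_{t_0}^{t_1}[-\rho\|y-\mathrm y\|^2+(y-\mathrm y)^T(u-\mathrm u)]dt$ along trajectories. A system is (output-strictly) MEICMP if it is (output-strictly) passive w.r.t. every steady-state pair and its steady-state relation is maximal CM. *)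

From Stdlib Require Import Reals Relations.
From mathcomp Require Import all_boot.
Unset Implicit Arguments.
Unset Strict Implicit.
Unset Printing Implicit Defensive.
Open Scope R_scope.

Definition vec (n : nat) := 'I_n -> R.
Definition vzero {n} : vec n := fun _ => 0.
Definition vsub {n} (a b : vec n) : vec n := fun k => a k - b k.
Definition dot {n} (a b : vec n) : R := \big[Rplus/0]_(k < n) (a k * b k).
Definition sqnorm {n} (a : vec n) : R := dot a a.
Definition vsum {m n} (a : 'I_m -> vec n) : vec n :=
  fun l => \big[Rplus/0]_(i < m) a i l.

Definition msum {m n} (A : 'I_m -> vec n -> Prop) : vec n -> Prop :=
  fun v => exists a : 'I_m -> vec n, (forall i, A i (a i)) /\ v = vsum a.

(* vertices 'I_N, edges 'I_M, edge k oriented from src k to dst k *)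
(* incidence matrix entry E_{ik}: -1 if i = src k, +1 if i = dst k *)
Definition inc {N M} (src dst : 'I_M -> 'I_N) (i : 'I_N) (k : 'I_M) : R :=
  (if dst k == i then 1 else 0) - (if src k == i then 1 else 0).

Definition adj {N M} (src dst : 'I_M -> 'I_N) (i j : 'I_N) : Prop :=
  exists k, (src k = i /\ dst k = j) \/ (src k = j /\ dst k = i).

Definition connected {N M} (src dst : 'I_M -> 'I_N) : Prop :=
  forall i j, clos_refl_trans _ (adj src dst) i j.

(* zeta = (E ⊗ I_d)^T y *)
Definition incT_mul {N M d} (src dst : 'I_M -> 'I_N) (y : 'I_N -> vec d)
  : 'I_M -> vec d :=
  fun k l => \big[Rplus/0]_(i < N) (inc src dst i k * y i l).
(* u = -(E ⊗ I_d) mu *)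
Definition neg_inc_mul {N M d} (src dst : 'I_M -> 'I_N) (mu : 'I_M -> vec d)
  : 'I_N -> vec d :=
  fun i l => - \big[Rplus/0]_(k < M) (inc src dst i k * mu k l).

(* xdot = f(x,u), y = h(x,u), state x in R^sdim (sdim = 0: static system);
   fixed constant parameters w are absorbed into f and h. *)
Record sys (din dout : nat) := Sys {
  sdim : nat;
  sf : vec sdim -> vec din -> vec sdim;
  sh : vec sdim -> vec din -> vec dout }.
Arguments sdim {din dout} _.
Arguments sf {din dout} _ _ _.
Arguments sh {din dout} _ _ _.

Definition ss_rel {din dout} (S : sys din dout) (u : vec din) (y : vec dout) : Prop :=
  exists x : vec (sdim S), sf S x u = vzero /\ y = sh S x u.

Definition k_inv {din dout} (S : sys din dout) (y : vec dout) : vec din -> Prop :=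
  fun u => ss_rel S u y.

Definition trajectory_on {din dout} (S : sys din dout)
  (x : R -> vec (sdim S)) (u : R -> vec din) (t0 t1 : R) : Prop :=
  (forall c t, t0 <= t <= t1 ->
     limit1_in (fun s => x s c) (fun s => t0 <= s <= t1) (x t c) t) /\
  (forall c t, t0 < t < t1 ->
     derivable_pt_lim (fun s => x s c) t (sf S (x t) (u t) c)).

Definition dissipative {d} (S : sys d d) (St : vec (sdim S) -> R) (rho : R)
  (u0 y0 : vec d) : Prop :=
  forall (t0 t1 : R) (x : R -> vec (sdim S)) (u : R -> vec d),
    t0 <= t1 -> trajectory_on S x u t0 t1 ->
    forall pr : Riemann_integrable
        (fun t => - rho * sqnorm (vsub (sh S (x t) (u t)) y0)
                  + dot (vsub (sh S (x t) (u t)) y0) (vsub (u t) u0)) t0 t1,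
      St (x t1) - St (x t0) <= RiemannInt pr.

Definition passive_wrt {d} (S : sys d d) (u0 y0 : vec d) : Prop :=
  exists (St : vec (sdim S) -> R) (rho : R),
    (forall x, 0 <= St x) /\ 0 <= rho /\ dissipative S St rho u0 y0.

Definition os_passive_wrt {d} (S : sys d d) (u0 y0 : vec d) : Prop :=
  exists (St : vec (sdim S) -> R) (rho : R),
    (forall x, 0 <= St x) /\ 0 < rho /\ dissipative S St rho u0 y0.

Definition cyc_monotone {d} (Rl : vec d -> vec d -> Prop) : Prop :=
  forall (n : nat) (us ys : nat -> vec d),
    (1 <= n)%nat ->
    (forall i, (1 <= i <= n)%nat -> Rl (us i) (ys i)) ->
    0 <= \big[Rplus/0]_(1 <= i < n.+1)
           dot (ys i) (vsub (us i) (us (if i == 1%nat then n else i.-1))).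

Definition max_cyc_monotone {d} (Rl : vec d -> vec d -> Prop) : Prop :=
  cyc_monotone Rl /\
  forall Rl' : vec d -> vec d -> Prop,
    cyc_monotone Rl' -> (forall u y, Rl u y -> Rl' u y) ->
    (forall u y, Rl' u y -> Rl u y).

Definition MEICMP {d} (S : sys d d) : Prop :=
  (forall u0 y0, ss_rel S u0 y0 -> passive_wrt S u0 y0) /\
  max_cyc_monotone (ss_rel S).

Definition OS_MEICMP {d} (S : sys d d) : Prop :=
  (forall u0 y0, ss_rel S u0 y0 -> os_passive_wrt S u0 y0) /\
  max_cyc_monotone (ss_rel S).

Definition closed_loop_ss {N M d} (src dst : 'I_M -> 'I_N)
  (Sigma : 'I_N -> sys d d) (Pi : 'I_M -> sys d d)
  (u y : 'I_N -> vec d) (zeta mu : 'I_M -> vec d) : Prop :=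
  (forall i, ss_rel (Sigma i) (u i) (y i)) /\
  (forall e, ss_rel (Pi e) (zeta e) (mu e)) /\
  zeta = incT_mul src dst y /\
  u = neg_inc_mul src dst mu.

(* Necessity: the controller outputs enter the agents only through the
   incidence matrix, whose columns sum to zero, so the steady-state inputs of
   the agents sum to zero.  Sufficiency: on a connected graph the vectors
   summing to zero are exactly the range of the incidence matrix (route a unit
   flow from a root to each vertex), so the desired inputs can be written as
   [-E mu].  Each edge then gets the static controller [mu_e = zeta_e + c_e]
   with [c_e] tuned so that it passes through [(zeta_e, mu_e)]; a translated
   identity is output-strictly passive and its graph is maximal cyclically
   monotone. *)
From HB Require Import structures.
From Stdlib Require Import Reals Lra Relations.
From Stdlib Require Import FunctionalExtensionality PropExtensionality.
From mathcomp Require Import all_boot.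
Open Scope R_scope.

HB.instance Definition _ :=
  Monoid.isComLaw.Build R 0 Rplus (fun a b c => esym (Rplus_assoc a b c))
    Rplus_comm Rplus_0_l.
HB.instance Definition _ := Monoid.isMulLaw.Build R 0 Rmult Rmult_0_l Rmult_0_r.
HB.instance Definition _ :=
  Monoid.isAddLaw.Build R Rmult Rplus Rmult_plus_distr_r Rmult_plus_distr_l.

Lemma sumR_opp (I : Type) (r : seq I) (P : pred I) (F : I -> R) :
  - (\big[Rplus/0]_(i <- r | P i) F i) = \big[Rplus/0]_(i <- r | P i) - F i.
Proof. exact: (big_morph Ropp Ropp_plus_distr Ropp_0). Qed.

Lemma sumR_ge0 (I : Type) (r : seq I) (P : pred I) (F : I -> R) :
  (forall i, P i -> 0 <= F i) -> 0 <= \big[Rplus/0]_(i <- r | P i) F i.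
Proof. by move=> HF; apply: big_ind => [|x y|//]; lra. Qed.

Lemma sumR_kronecker n (j : 'I_n) (G : 'I_n -> R) :
  \big[Rplus/0]_(i < n) ((if j == i then 1 else 0) * G i) = G j.
Proof.
rewrite (bigD1 j) //= eqxx big1 => [|i /negbTE]; first lra.
by rewrite eq_sym => ->; lra.
Qed.

Lemma sumR_mul_indicator n (F : 'I_n -> R) (j : 'I_n) c :
  \big[Rplus/0]_(i < n) (F i * (if i == j then c else 0)) = F j * c.
Proof. by rewrite (bigD1 j) //= eqxx big1 => [|i /negbTE ->]; lra. Qed.

Lemma sqnorm_le0 n (v : vec n) : sqnorm v <= 0 -> v = vzero.
Proof.
rewrite /sqnorm /dot => Hv; apply: functional_extensionality => k.
move: Hv; rewrite (bigD1 k) //=; set rest := \big[_/_]_(_ <- _ | _) _ => Hv.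
have Hrest : 0 <= rest by apply: sumR_ge0 => j _; apply: Rle_0_sqr.
apply: Rsqr_0_uniq; apply: Rle_antisym; last exact: Rle_0_sqr.
rewrite /Rsqr; lra.
Qed.

Lemma big_cyclic_shift n (g : nat -> R) : (1 <= n)%N ->
  \big[Rplus/0]_(1 <= i < n.+1) g (if i == 1%N then n else i.-1) =
  \big[Rplus/0]_(1 <= i < n.+1) g i.
Proof.
case: n => [//|n] _.
rewrite big_nat_recl // (big_nat_recr n.+1) //=.
rewrite (@eq_big_nat _ _ _ 1 n.+1 _ g); first exact: Rplus_comm.
by move=> [|i].
Qed.

(* [(x + b) dx] is the differential of [h x = x^2/2 + b x]; along a cycle the
   increments of [h] telescope away and a sum of squares remains. *)
Lemma cyclic_sum_translation_ge0 n (x : nat -> R) b : (1 <= n)%N ->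
  0 <= \big[Rplus/0]_(1 <= i < n.+1)
         ((x i + b) * (x i - x (if i == 1%N then n else i.-1))).
Proof.
move=> Hn.
pose h z := z * z / 2 + b * z.
pose p i := if i == 1%N then n else i.-1.
pose q i := (x i - x (p i)) * (x i - x (p i)) / 2.
rewrite (eq_bigr (fun i => (h (x i) + - h (x (p i))) + q i)); last first.
  by move=> i _; rewrite /h /q /p; field.
rewrite 2!big_split -sumR_opp (big_cyclic_shift n (fun i => h (x i))) //=.
have : 0 <= \big[Rplus/0]_(1 <= i < n.+1) q i.
  by apply: sumR_ge0 => i _; have := Rle_0_sqr (x i - x (p i)); rewrite /Rsqr /q; lra.
lra.
Qed.

Definition vadd {n} (a b : vec n) : vec n := fun k => a k + b k.

Definition translation_rel {d} (c : vec d) (u y : vec d) : Prop := y = vadd u c.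

Lemma translation_cyc_monotone d (c : vec d) : cyc_monotone (translation_rel c).
Proof.
move=> n us ys Hn Hys.
rewrite (@eq_big_nat _ _ _ 1 n.+1 _ (fun i => dot (vadd (us i) c)
   (vsub (us i) (us (if i == 1%N then n else i.-1))))); last first.
  by move=> i Hi; rewrite (Hys i Hi).
rewrite /dot /vsub /vadd exchange_big /=.
apply: sumR_ge0 => k _.
exact: (cyclic_sum_translation_ge0 n (fun i => us i k) (c k) Hn).
Qed.

(* A pair [(u, y)] of a cyclically monotone extension is tested against the
   single point [w = u + v/2], where [v = y - (u + c)]: the 2-cycle sum is
   [- |v|^2 / 4]. *)
Lemma translation_max_cyc_monotone d (c : vec d) :
  max_cyc_monotone (translation_rel c).
Proof.
split; first exact: translation_cyc_monotone.
move=> Rl' Hcm Hsub u y Huy.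
pose v := vsub y (vadd u c).
pose w : vec d := fun l => u l + v l / 2.
have Hw : Rl' w (vadd w c) by apply: Hsub.
have Hpts : forall i, (1 <= i <= 2)%N ->
    Rl' (if i == 1%N then u else w) (if i == 1%N then y else vadd w c).
  by move=> [|[|[|i]]].
have := Hcm 2%N _ _ isT Hpts.
rewrite big_nat_recl // big_nat_recl // big_geq //= Rplus_0_r /dot -big_split.
rewrite (eq_bigr (fun k => v k * v k * - / 4)); last first.
  by move=> k _; rewrite /w /v /vsub /vadd /=; field.
rewrite -big_distrl /= -/(dot v v) -/(sqnorm v) => Hle.
have /sqnorm_le0 Hv0 : sqnorm v <= 0 by lra.
apply: functional_extensionality => l.
have := f_equal (fun z => z l) Hv0; rewrite /v /vsub /vadd /vzero; lra.
Qed.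

Definition translation_sys d (c : vec d) : sys d d :=
  @Sys d d 0%N (fun _ _ => vzero) (fun _ u => vadd u c).

Lemma ss_rel_translation_sys d (c : vec d) :
  ss_rel (translation_sys d c) = translation_rel c.
Proof.
apply: functional_extensionality => u; apply: functional_extensionality => y.
apply: propositional_extensionality; split; first by case=> x [_ ->].
by move=> ->; exists vzero.
Qed.

Lemma translation_os_passive d (c u0 y0 : vec d) :
  translation_rel c u0 y0 -> os_passive_wrt (translation_sys d c) u0 y0.
Proof.
move=> Hy0; exists (fun _ => 0), 1; split; first by move=> _; lra.
split; first lra.
move=> t0 t1 x u Ht _ pr.
have Hzero : forall t, t0 < t < t1 ->
    0 <= - 1 * sqnorm (vsub (sh (translation_sys d c) (x t) (u t)) y0)
         + dot (vsub (sh (translation_sys d c) (x t) (u t)) y0) (vsub (u t) u0) <= 0.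
  move=> t _.
  have -> : vsub (sh (translation_sys d c) (x t) (u t)) y0 = vsub (u t) u0.
    by apply: functional_extensionality => l; rewrite /vsub Hy0 /= /vadd; lra.
  rewrite /sqnorm; lra.
have := RiemannInt_const_bound pr Ht Hzero; lra.
Qed.

Lemma translation_OS_MEICMP d (c : vec d) : OS_MEICMP (translation_sys d c).
Proof.
split; last by rewrite ss_rel_translation_sys; apply: translation_max_cyc_monotone.
by move=> u0 y0; rewrite ss_rel_translation_sys; apply: translation_os_passive.
Qed.

Section Incidence.

Context {N M : nat} (src dst : 'I_M -> 'I_N).

Lemma sum_inc_col k : \big[Rplus/0]_(i < N) inc src dst i k = 0.
Proof.
rewrite (eq_bigr (fun i => (if dst k == i then 1 else 0) * 1
                           + - ((if src k == i then 1 else 0) * 1))); last first.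
  by move=> i _; rewrite /inc; lra.
rewrite big_split -sumR_opp !sumR_kronecker /=; lra.
Qed.

Lemma vsum_neg_inc_mul d (mu : 'I_M -> vec d) :
  vsum (neg_inc_mul src dst mu) = vzero.
Proof.
apply: functional_extensionality => l.
rewrite /vsum /neg_inc_mul -sumR_opp exchange_big /= big1 ?Ropp_0 // => k _.
by rewrite -big_distrl /= sum_inc_col Rmult_0_l.
Qed.

Lemma unit_flow_exists {i j} : clos_refl_trans _ (adj src dst) i j ->
  exists f : 'I_M -> R, forall v,
    - (\big[Rplus/0]_(k < M) (inc src dst v k * f k)) =
    (if v == j then 1 else 0) - (if v == i then 1 else 0).
Proof.
elim=> {i j} [i j [k0 [[<- <-]|[<- <-]]]| i | i j k _ [f1 H1] _ [f2 H2]].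
- exists (fun k => if k == k0 then -1 else 0) => v.
  by rewrite sumR_mul_indicator /inc !(eq_sym v); case: eqP; case: eqP; lra.
- exists (fun k => if k == k0 then 1 else 0) => v.
  by rewrite sumR_mul_indicator /inc !(eq_sym v); case: eqP; case: eqP; lra.
- by exists (fun _ => 0) => v; rewrite big1 => [|k _]; lra.
- exists (fun e => f1 e + f2 e) => v.
  rewrite (eq_bigr (fun e => inc src dst v e * f1 e + inc src dst v e * f2 e));
    last by move=> e _; lra.
  by rewrite big_split Ropp_plus_distr H1 H2; case: (v == i); case: (v == j);
    case: (v == k); lra.
Qed.

End Incidence.

Lemma zero_sum_neg_inc_mul {N M} {src dst : 'I_M -> 'I_N} {d} {a : 'I_N -> vec d} :
  connected src dst -> vsum a = vzero ->
  exists mu : 'I_M -> vec d, a = neg_inc_mul src dst mu.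
Proof.
case: N => [|N] in src dst a *.
  by exists (fun _ => vzero); apply: functional_extensionality => -[].
move=> Hconn Hsum.
have [F HF] := fin_all_exists (fun i => unit_flow_exists src dst (Hconn ord0 i)).
(* Superpose the unit flows from the root [ord0] to each [i], weighted by
   [a i]; the root's excess is [- sum_i a i = 0]. *)
exists (fun k l => \big[Rplus/0]_(i < N.+1) (F i k * a i l)).
apply: functional_extensionality => v; apply: functional_extensionality => l.
have Hsuml : \big[Rplus/0]_(i < N.+1) a i l = 0 by rewrite -[RHS]/(vzero l) -Hsum.
rewrite /neg_inc_mul.
rewrite (eq_bigr (fun k => \big[Rplus/0]_(i < N.+1)
                     (inc src dst v k * F i k * a i l))); last first.
  by move=> k _; rewrite big_distrr; apply: eq_bigr => i _; rewrite Rmult_assoc.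
rewrite exchange_big sumR_opp.
rewrite (eq_bigr (fun i => (if v == i then 1 else 0) * a i l
                           + - ((if v == ord0 then 1 else 0) * a i l))); last first.
  move=> i _; rewrite -big_distrl /= Ropp_mult_distr_l HF.
  by case: (v == i); case: (v == ord0); lra.
by rewrite big_split -sumR_opp -big_distrr /= Hsuml sumR_kronecker; lra.
Qed.

Theorem mainTheorem7 (d N M : nat) (src dst : 'I_M -> 'I_N)
  (Sigma : 'I_N -> sys d d)
  (Hd : (1 <= d)%nat)
  (Hconn : connected src dst)
  (HSigma : forall i, MEICMP (Sigma i))
  (y : 'I_N -> vec d) :
  (exists Pi : 'I_M -> sys d d,
      (forall e, OS_MEICMP (Pi e)) /\
      exists (u : 'I_N -> vec d) (zeta mu : 'I_M -> vec d),
        closed_loop_ss src dst Sigma Pi u y zeta mu)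
  <-> msum (fun i => k_inv (Sigma i) (y i)) vzero.
Proof.
split.
- move=> [Pi [_ [u [zeta [mu [Hu [_ [_ Hum]]]]]]]].
  by exists u; split; [exact: Hu | rewrite Hum vsum_neg_inc_mul].
- move=> [a [Ha Hs]].
  have [mu Hmu] := zero_sum_neg_inc_mul Hconn (esym Hs).
  pose zeta := incT_mul src dst y.
  exists (fun e => translation_sys d (vsub (mu e) (zeta e))).
  split; first by move=> e; apply: translation_OS_MEICMP.
  exists a, zeta, mu; split; first exact: Ha.
  split=> [e|//]; rewrite ss_rel_translation_sys.
  by apply: functional_extensionality => l; rewrite /vadd /vsub; lra.
Qed.
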